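(* Let $X$ be a Banach space and $T\in\mathrm{Lip}_0(X)$. Then (a) $\|I+T\|_L=1+\|T\|_L$ if and only if $\sup\operatorname{Re}W(T)=\|T\|_L$; (b) $\max_{\alpha\in\mathbb{T}}\|I+\alpha T\|_L=1+\|T\|_L$ if and only if $\omega(T)=\|T\|_L$. Consequently, $n_L(X)=1$ if and only if every $T\in\mathrm{Lip}_0(X)$ with $\|T\|_L=1$ satisfies $\max_{\alpha\in\mathbb{T}}\|I+\alpha T\|_L=2$.
   Context: $X$ is a Banach space over $\mathbb{K}=\mathbb{R}$ or $\mathbb{C}$; $\mathbb{T}=\{\alpha\in\mathbb{K}:|\alpha|=1\}$; $I$ is the identity of $X$. $\mathrm{Lip}_0(X)$ is the set of Lipschitz maps $T:X\to X$ with $T(0)=0$, with $\|T\|_L=\sup\{\|Tx-Ty\|/\|x-y\|: x\neq y\}$. $D(x)=\{x^*\in X^*: x^*(x)=\|x^*\|\|x\|=\|x\|^2\}$. $W(T)=\{ f(Tx-Ty)/\|x-y\|^2 : x\neq y,\ f\in D(x-y)\}$, $\omega(T)=\sup\{|\lambda|:\lambda\in W(T)\}$, and $n_L(X)=\inf\{\omega(T): T\in\mathrm{Lip}_0(X),\ \|T\|_L=1\}$. *)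

From Stdlib Require Import Reals Lra Classical ClassicalEpsilon.
Open Scope R_scope.

Record Cplx := mkC { cre : R; cim : R }.
Definition Cadd (z w : Cplx) := mkC (cre z + cre w) (cim z + cim w).
Definition Cmul (z w : Cplx) :=
  mkC (cre z * cre w - cim z * cim w) (cre z * cim w + cim z * cre w).
Definition Copp (z : Cplx) := mkC (- cre z) (- cim z).
Definition Cabs (z : Cplx) := sqrt (cre z ^ 2 + cim z ^ 2).

Inductive kind := RealK | ComplexK.

Definition Scal (k : kind) : Type :=
  match k with RealK => R | ComplexK => Cplx end.

Definition sadd (k : kind) : Scal k -> Scal k -> Scal k :=
  match k as k0 return Scal k0 -> Scal k0 -> Scal k0 with
  | RealK => Rplus | ComplexK => Cadd end.
Definition smul (k : kind) : Scal k -> Scal k -> Scal k :=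
  match k as k0 return Scal k0 -> Scal k0 -> Scal k0 with
  | RealK => Rmult | ComplexK => Cmul end.
Definition sopp (k : kind) : Scal k -> Scal k :=
  match k as k0 return Scal k0 -> Scal k0 with
  | RealK => Ropp | ComplexK => Copp end.
Definition sofR (k : kind) : R -> Scal k :=
  match k as k0 return R -> Scal k0 with
  | RealK => fun r => r | ComplexK => fun r => mkC r 0 end.
Definition s0 (k : kind) : Scal k := sofR k 0.
Definition s1 (k : kind) : Scal k := sofR k 1.
Definition sabs (k : kind) : Scal k -> R :=
  match k as k0 return Scal k0 -> R with
  | RealK => Rabs | ComplexK => Cabs end.
Definition sRe (k : kind) : Scal k -> R :=
  match k as k0 return Scal k0 -> R with
  | RealK => fun r => r | ComplexK => cre end.

Record BanachSpace (k : kind) := {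
  V :> Type;
  vadd : V -> V -> V;
  vzero : V;
  vopp : V -> V;
  vscal : Scal k -> V -> V;
  vnorm : V -> R;
  vaddA : forall x y z, vadd x (vadd y z) = vadd (vadd x y) z;
  vaddC : forall x y, vadd x y = vadd y x;
  vadd0 : forall x, vadd x vzero = x;
  vaddN : forall x, vadd x (vopp x) = vzero;
  vscal1 : forall x, vscal (s1 k) x = x;
  vscalA : forall a b x, vscal a (vscal b x) = vscal (smul k a b) x;
  vscalDl : forall a b x, vscal (sadd k a b) x = vadd (vscal a x) (vscal b x);
  vscalDr : forall a x y, vscal a (vadd x y) = vadd (vscal a x) (vscal a y);
  vnorm_eq0 : forall x, vnorm x = 0 -> x = vzero;
  vnormZ : forall a x, vnorm (vscal a x) = sabs k a * vnorm x;
  vnorm_tri : forall x y, vnorm (vadd x y) <= vnorm x + vnorm y;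
  vcomplete : forall u : nat -> V,
    (forall eps, 0 < eps -> exists N, forall n m, (N <= n)%nat -> (N <= m)%nat ->
        vnorm (vadd (u n) (vopp (u m))) < eps) ->
    exists l, forall eps, 0 < eps -> exists N, forall n, (N <= n)%nat ->
        vnorm (vadd (u n) (vopp l)) < eps
}.

Arguments vadd {k X} : rename.
Arguments vzero {k} X : rename.
Arguments vopp {k X} : rename.
Arguments vscal {k X} : rename.
Arguments vnorm {k X} : rename.

Definition vsub {k} {X : BanachSpace k} (x y : X) : X := vadd x (vopp y).

(** * Suprema / infima of real sets (value 0 if no least upper bound exists;
      all sets used below are nonempty and bounded). *)
Definition Rsup (E : R -> Prop) : R :=
  match excluded_middle_informative (exists l, is_lub E l) with
  | left H => proj1_sig (constructive_indefinite_description _ H)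
  | right _ => 0
  end.
Definition Rinf (E : R -> Prop) : R := - Rsup (fun r => E (- r)).

Definition is_max (E : R -> Prop) (m : R) : Prop := E m /\ forall r, E r -> r <= m.

Definition is_linear_functional {k} (X : BanachSpace k) (f : X -> Scal k) : Prop :=
  (forall x y, f (vadd x y) = sadd k (f x) (f y)) /\
  (forall a x, f (vscal a x) = smul k a (f x)).

Definition in_dual {k} (X : BanachSpace k) (f : X -> Scal k) : Prop :=
  is_linear_functional X f /\ exists M, forall x, sabs k (f x) <= M * vnorm x.

Definition dual_norm {k} (X : BanachSpace k) (f : X -> Scal k) : R :=
  Rsup (fun r => exists x : X, vnorm x <= 1 /\ r = sabs k (f x)).

Definition Dset {k} (X : BanachSpace k) (x : X) (f : X -> Scal k) : Prop :=
  in_dual X f /\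
  f x = sofR k (dual_norm X f * vnorm x) /\
  dual_norm X f * vnorm x = vnorm x ^ 2.

Definition Lip0 {k} (X : BanachSpace k) (T : X -> X) : Prop :=
  T (vzero X) = vzero X /\
  exists L, forall x y : X, vnorm (vsub (T x) (T y)) <= L * vnorm (vsub x y).

Definition lipnorm {k} (X : BanachSpace k) (T : X -> X) : R :=
  Rsup (fun r => exists x y : X, x <> y /\
          r = vnorm (vsub (T x) (T y)) / vnorm (vsub x y)).

Definition Wset {k} (X : BanachSpace k) (T : X -> X) (l : Scal k) : Prop :=
  exists (x y : X) (f : X -> Scal k), x <> y /\ Dset X (vsub x y) f /\
    l = smul k (f (vsub (T x) (T y))) (sofR k (/ (vnorm (vsub x y) ^ 2))).

Definition supReW {k} (X : BanachSpace k) (T : X -> X) : R :=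
  Rsup (fun r => exists l, Wset X T l /\ r = sRe k l).

Definition omega {k} (X : BanachSpace k) (T : X -> X) : R :=
  Rsup (fun r => exists l, Wset X T l /\ r = sabs k l).

Definition nL {k} (X : BanachSpace k) : R :=
  Rinf (fun r => exists T : X -> X, Lip0 X T /\ lipnorm X T = 1 /\ r = omega X T).

Definition IplusT {k} (X : BanachSpace k) (a : Scal k) (T : X -> X) : X -> X :=
  fun x => vadd x (vscal a (T x)).

Definition rot_norms {k} (X : BanachSpace k) (T : X -> X) (r : R) : Prop :=
  exists a : Scal k, sabs k a = 1 /\ r = lipnorm X (IplusT X a T).

(** Write L = ‖T‖_L and M = sup Re W(T).  The heart of the proof is the lower bound
        1 + Re(αλ) <= ‖I + αT‖_L   for λ ∈ W(T)                [numrange_lower_bound],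
    obtained by testing I + αT on the pair (x, y) defining λ with its functional
    f ∈ D(x - y); with ‖I + αT‖_L <= 1 + |α| L it gives "⇐" of (a).  For "⇒" of (a) an
    almost extremal pair (z, z') for I + T is perturbed to (z, z' - s(Tz - Tz')); a
    supporting functional at the new difference yields (1 + s(L - s))(1 - sM) <= 1 + s²L²
    for small s > 0 [shift_estimate, partA_quadratic], which forces M >= L
    [quadratic_limit].  Part (b) is (a) applied to αT, once α ↦ ‖I + αT‖_L is known to
    attain its maximum on the unit sphere of K (it is L-Lipschitz in α and the sphere is
    compact) [rotation_max].  The statement on n_L(X) is (b) for ‖T‖_L = 1.
    Supporting functionals (D(x) <> ∅) come from the Hahn–Banach theorem, proved by Zorn's
    lemma on graphs of dominated partial functionals, followed by complexification. *)

From Stdlib Require Import Reals.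
Open Scope R_scope.
From Stdlib Require Import Lra Classical ClassicalEpsilon
  FunctionalExtensionality PropExtensionality.
From mathcomp Require classical_sets.

Lemma sadd_sofR k r s : sadd k (sofR k r) (sofR k s) = sofR k (r + s).
Proof. destruct k; simpl; auto. unfold Cadd; simpl; f_equal; ring. Qed.

Lemma smul_sofR k r s : smul k (sofR k r) (sofR k s) = sofR k (r * s).
Proof. destruct k; simpl; auto. unfold Cmul; simpl; f_equal; ring. Qed.

Lemma sopp_sofR k r : sopp k (sofR k r) = sofR k (- r).
Proof. destruct k; simpl; auto. unfold Copp; simpl; f_equal; ring. Qed.

Lemma sabs_sofR k r : sabs k (sofR k r) = Rabs r.
Proof.
  destruct k; simpl; auto. unfold Cabs; simpl.
  rewrite <- sqrt_Rsqr_abs. f_equal. unfold Rsqr; ring.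
Qed.

Lemma sRe_sofR k r : sRe k (sofR k r) = r.
Proof. destruct k; reflexivity. Qed.

Lemma sabs_ge0 k z : 0 <= sabs k z.
Proof. destruct k; simpl. apply Rabs_pos. unfold Cabs; apply sqrt_pos. Qed.

Lemma sabs_mul k a b : sabs k (smul k a b) = sabs k a * sabs k b.
Proof.
  destruct k; simpl. apply Rabs_mult.
  unfold Cabs, Cmul; simpl. rewrite <- sqrt_mult_alt.
  - f_equal; ring.
  - destruct a; simpl; nra.
Qed.

Lemma sRe_add k a b : sRe k (sadd k a b) = sRe k a + sRe k b.
Proof. destruct k; reflexivity. Qed.

Lemma sRe_mull k z c : sRe k (smul k (sofR k c) z) = c * sRe k z.
Proof. destruct k; simpl; auto. ring. Qed.

Lemma sRe_mulr k z c : sRe k (smul k z (sofR k c)) = sRe k z * c.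
Proof. destruct k; simpl; auto. ring. Qed.

Lemma sRe_mulA_sofR k a b c :
  sRe k (smul k a (smul k b (sofR k c))) = sRe k (smul k a b) * c.
Proof. destruct k; simpl; ring. Qed.

Lemma sabs_opp k z : sabs k (sopp k z) = sabs k z.
Proof.
  destruct k; simpl. apply Rabs_Ropp.
  unfold Cabs, Copp; simpl. f_equal; ring.
Qed.

Lemma smul_s1 k z : smul k (s1 k) z = z.
Proof. destruct k; simpl. ring. destruct z; unfold Cmul; simpl; f_equal; ring. Qed.

Lemma smul_addr k c a b : smul k c (sadd k a b) = sadd k (smul k c a) (smul k c b).
Proof. destruct k; simpl. ring. unfold Cmul, Cadd; simpl. f_equal; ring. Qed.

Lemma smul_swap k a b z : smul k a (smul k b z) = smul k b (smul k a z).
Proof. destruct k; simpl. ring. unfold Cmul; simpl. f_equal; ring. Qed.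

Lemma sRe_abs_le k z : Rabs (sRe k z) <= sabs k z.
Proof.
  destruct k; simpl. lra.
  unfold Cabs. destruct z as [a b]; simpl.
  rewrite <- sqrt_Rsqr_abs. apply sqrt_le_1_alt. unfold Rsqr. nra.
Qed.

Lemma sRe_le_abs k z : sRe k z <= sabs k z.
Proof. pose proof (sRe_abs_le k z). pose proof (Rle_abs (sRe k z)). lra. Qed.

Lemma sRe_ge_mabs k z : - sabs k z <= sRe k z.
Proof.
  pose proof (sRe_abs_le k z). pose proof (Rle_abs (- sRe k z)).
  rewrite Rabs_Ropp in H0. lra.
Qed.

Lemma unit_rotation k (l : Scal k) : exists a, sabs k a = 1 /\ sRe k (smul k a l) = sabs k l.
Proof.
  destruct k; simpl in *.
  - destruct (Rle_dec 0 l).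
    + exists 1. rewrite Rabs_R1, Rabs_right by lra. split; auto; ring.
    + exists (- (1)). rewrite Rabs_Ropp, Rabs_R1, Rabs_left by lra. split; auto; ring.
  - destruct l as [p q]. set (r := Cabs (mkC p q)).
    assert (r2 : r * r = p ^ 2 + q ^ 2) by (apply sqrt_sqrt; nra).
    destruct (Req_dec r 0) as [Hr|Hr].
    + exists (mkC 1 0). unfold Cabs, Cmul; cbn [cre cim]. fold r.
      rewrite Hr in r2 |- *. split.
      * replace (1 ^ 2 + 0 ^ 2) with 1 by ring. apply sqrt_1.
      * assert (p = 0) by nra. subst. ring.
    + assert (rpos : 0 < r) by (pose proof (sabs_ge0 ComplexK (mkC p q)); simpl in H; fold r in H; lra).
      exists (mkC (p / r) (- q / r)). unfold Cabs, Cmul; cbn [cre cim]. fold r. split.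
      * transitivity (sqrt 1); [|apply sqrt_1]. f_equal.
        replace ((p / r) ^ 2 + (- q / r) ^ 2) with ((p ^ 2 + q ^ 2) / (r * r)) by (field; lra).
        rewrite <- r2. field. lra.
      * replace (p / r * p - - q / r * q) with ((p ^ 2 + q ^ 2) / r) by (field; lra).
        rewrite <- r2. field. lra.
Qed.

Arguments vaddA {k b0}. Arguments vaddC {k b0}. Arguments vadd0 {k b0}.
Arguments vaddN {k b0}. Arguments vscal1 {k b0}. Arguments vscalA {k b0}.
Arguments vscalDl {k b0}. Arguments vscalDr {k b0}. Arguments vnorm_eq0 {k b0}.
Arguments vnormZ {k b0}. Arguments vnorm_tri {k b0}.

Definition rs {k} {X : BanachSpace k} (r : R) (x : X) : X := vscal (sofR k r) x.

Section VectorAlgebra.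
Context {k : kind} {X : BanachSpace k}.
Implicit Types x y z u v : X.

Lemma add0l x : vadd (vzero X) x = x.
Proof. rewrite vaddC. apply vadd0. Qed.

Lemma addNl x : vadd (vopp x) x = vzero X.
Proof. rewrite vaddC. apply vaddN. Qed.

Lemma add_cancel_l x y z : vadd x y = vadd x z -> y = z.
Proof. intro H. rewrite <- (add0l y), <- (add0l z), <- (addNl x), <- !vaddA, H. reflexivity. Qed.

Lemma add_cancel_r x y z : vadd y x = vadd z x -> y = z.
Proof. rewrite (vaddC y), (vaddC z). apply add_cancel_l. Qed.

Lemma opp_unique x y : vadd x y = vzero X -> y = vopp x.
Proof. intro H. apply (add_cancel_l x). rewrite H, vaddN. reflexivity. Qed.

Lemma vscal_s0 x : vscal (s0 k) x = vzero X.
Proof.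
  apply (add_cancel_l (vscal (s0 k) x)). rewrite <- vscalDl, vadd0.
  unfold s0. rewrite sadd_sofR, Rplus_0_r. reflexivity.
Qed.

Lemma vscal_z0 a : vscal a (vzero X) = vzero X.
Proof. apply (add_cancel_l (vscal a (vzero X))). rewrite <- vscalDr, !vadd0. reflexivity. Qed.

Lemma norm0 : vnorm (vzero X) = 0.
Proof. rewrite <- (vscal_s0 (vzero X)), vnormZ. unfold s0. rewrite sabs_sofR, Rabs_R0. ring. Qed.

Lemma oppK x : vopp (vopp x) = x.
Proof. symmetry. apply opp_unique. apply addNl. Qed.

Lemma vaddACA x y u v : vadd (vadd x y) (vadd u v) = vadd (vadd x u) (vadd y v).
Proof. rewrite <- !vaddA. f_equal. rewrite !vaddA. f_equal. apply vaddC. Qed.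

Lemma opp_add x y : vopp (vadd x y) = vadd (vopp x) (vopp y).
Proof. symmetry. apply opp_unique. rewrite vaddACA, !vaddN, vadd0. reflexivity. Qed.

Lemma vopp_scal x : vopp x = vscal (sopp k (s1 k)) x.
Proof.
  symmetry. apply opp_unique. rewrite <- (vscal1 x) at 1. rewrite <- vscalDl.
  unfold s1. rewrite sopp_sofR, sadd_sofR, Rplus_opp_r. apply vscal_s0.
Qed.

Lemma norm_opp x : vnorm (vopp x) = vnorm x.
Proof. rewrite vopp_scal, vnormZ, sabs_opp. unfold s1. rewrite sabs_sofR, Rabs_R1. ring. Qed.

Lemma norm_ge0 x : 0 <= vnorm x.
Proof. pose proof (vnorm_tri x (vopp x)). rewrite vaddN, norm0, norm_opp in H. lra. Qed.

Lemma norm_pos0 x : x <> vzero X -> 0 < vnorm x.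
Proof.
  intro H. destruct (norm_ge0 x) as [h|h]; auto.
  exfalso. apply H. apply vnorm_eq0. auto.
Qed.

Lemma scal_opp a x : vscal a (vopp x) = vopp (vscal a x).
Proof. apply opp_unique. rewrite <- vscalDr, vaddN. apply vscal_z0. Qed.

Lemma subxx x : vsub x x = vzero X.
Proof. apply vaddN. Qed.

Lemma sub_eq0 x y : vsub x y = vzero X -> x = y.
Proof. unfold vsub. intro H. rewrite <- (vadd0 x), <- (addNl y), vaddA, H. apply add0l. Qed.

Lemma sub_neq0 x y : x <> y -> vsub x y <> vzero X.
Proof. intros H E. apply H, sub_eq0, E. Qed.

Lemma norm_pos x y : x <> y -> 0 < vnorm (vsub x y).
Proof. intro H. apply norm_pos0, sub_neq0, H. Qed.

Lemma sub_add_add x y u v : vsub (vadd x y) (vadd u v) = vadd (vsub x u) (vsub y v).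
Proof. unfold vsub. rewrite opp_add. apply vaddACA. Qed.

Lemma scal_sub a x y : vscal a (vsub x y) = vsub (vscal a x) (vscal a y).
Proof. unfold vsub. rewrite vscalDr, scal_opp. reflexivity. Qed.

Lemma sub_add_l x y : vsub (vadd x y) x = y.
Proof. unfold vsub. rewrite (vaddC x), <- vaddA, vaddN, vadd0. reflexivity. Qed.

Lemma sub_sub_r x y z : vsub x (vsub y z) = vadd (vsub x y) z.
Proof. unfold vsub. rewrite opp_add, oppK, vaddA. reflexivity. Qed.

Lemma sub_chain x y z : vadd (vsub x y) (vsub y z) = vsub x z.
Proof. unfold vsub. rewrite <- vaddA, (vaddA (vopp y)), addNl, add0l. reflexivity. Qed.

Lemma rs_add r s x : rs (r + s) x = vadd (rs r x) (rs s x).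
Proof. unfold rs. rewrite <- sadd_sofR. apply vscalDl. Qed.

Lemma rs_addr r x y : rs r (vadd x y) = vadd (rs r x) (rs r y).
Proof. apply vscalDr. Qed.

Lemma rs_mul r s x : rs r (rs s x) = rs (r * s) x.
Proof. unfold rs. rewrite vscalA, smul_sofR. reflexivity. Qed.

Lemma rs1 x : rs 1 x = x.
Proof. apply vscal1. Qed.

Lemma rs0 x : rs 0 x = vzero X.
Proof. apply vscal_s0. Qed.

Lemma rs_opp r x : rs (- r) x = vopp (rs r x).
Proof. apply opp_unique. rewrite <- rs_add, Rplus_opp_r. apply rs0. Qed.

Lemma rs_norm r x : vnorm (rs r x) = Rabs r * vnorm x.
Proof. unfold rs. rewrite vnormZ, sabs_sofR. reflexivity. Qed.

Lemma rs_sub r x y : rs r (vsub x y) = vsub (rs r x) (rs r y).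
Proof. apply scal_sub. Qed.

End VectorAlgebra.

Lemma Rsup_lub E l : is_lub E l -> Rsup E = l.
Proof.
  intros [Hub Hl]. unfold Rsup. destruct excluded_middle_informative as [e|n].
  - destruct (constructive_indefinite_description _ e) as [m [Hm Hm']]; simpl.
    apply Rle_antisym; auto.
  - exfalso. apply n. exists l. split; auto.
Qed.

Lemma Rsup_spec E : (exists x, E x) -> (exists b, forall x, E x -> x <= b) -> is_lub E (Rsup E).
Proof.
  intros Hne [b Hb]. destruct (completeness E) as [m Hm].
  - exists b. intros x Hx. auto.
  - exact Hne.
  - rewrite (Rsup_lub E m Hm). exact Hm.
Qed.

Lemma Rsup_equiv E F : (forall r, E r <-> F r) -> Rsup E = Rsup F.
Proof.
  intro H. f_equal. apply functional_extensionality. intro r.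
  apply propositional_extensionality, H.
Qed.

Lemma lub_le E l x : is_lub E l -> E x -> x <= l.
Proof. intros [H _] Hx. apply H, Hx. Qed.

Lemma lub_least E l b : is_lub E l -> (forall x, E x -> x <= b) -> l <= b.
Proof. intros [_ H] Hb. apply H. intros x Hx; auto. Qed.

Lemma lub_approx E l eps : is_lub E l -> 0 < eps -> exists x, E x /\ l - eps < x.
Proof.
  intros H He. apply NNPP. intro Hn.
  assert (l <= l - eps).
  { apply (lub_least E l); auto. intros x Hx. apply Rnot_lt_le. intro Hlt. apply Hn. eauto. }
  lra.
Qed.

(** ** The Hahn–Banach theorem *)

(** Graphs G ⊆ X × R of dominated real-linear functionals defined on a real subspace
    containing x0 and taking the value ‖x0‖ there.  Closure under sums and real multiples
    encodes both that the domain is a subspace and that the functional is linear. *)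
Record partial_graph {k} (X : BanachSpace k) (x0 : X) (G : X * R -> Prop) : Prop := {
  pg_fun : forall u a b, G (u, a) -> G (u, b) -> a = b;
  pg_x0 : G (x0, vnorm x0);
  pg_add : forall u a v b, G (u, a) -> G (v, b) -> G (vadd u v, a + b);
  pg_scal : forall r u a, G (u, a) -> G (rs r u, r * a);
  pg_dom : forall u a, G (u, a) -> a <= vnorm u }.

Section HahnBanach.
Context {k : kind} (X : BanachSpace k) (x0 : X).

(** Zorn's lemma is applied to partial graphs together with the empty set (the union of
    the empty chain). *)
Definition pg_or_empty (G : X * R -> Prop) := partial_graph X x0 G \/ forall p, ~ G p.

Lemma pg_or_empty_nonempty G p : pg_or_empty G -> G p -> partial_graph X x0 G.
Proof. intros [H|H] Hp; auto. exfalso; eapply H; eauto. Qed.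

(** The union of a chain of partial graphs is a partial graph: any two of its points lie
    in a common member of the chain. *)
Lemma chain_union F :
  classical_sets.subset F pg_or_empty ->
  classical_sets.total_on F classical_sets.subset ->
  pg_or_empty (classical_sets.bigcup F (fun G => G)).
Proof.
  intros HF Htot. set (U := classical_sets.bigcup F (fun G => G)).
  assert (HU : forall p, U p <-> exists G, F G /\ G p).
  { intro p. split.
    - intros [G H1 H2]. eauto.
    - intros [G [H1 H2]]. econstructor; eauto. }
  destruct (classic (exists p, U p)) as [[p0 Hp0]|Hn].
  2:{ right. intros p Hp. apply Hn. eauto. }
  assert (two : forall p q, U p -> U q -> exists G, F G /\ partial_graph X x0 G /\ G p /\ G q).
  { intros p q Hp Hq. apply HU in Hp as [G1 [F1 G1p]]. apply HU in Hq as [G2 [F2 G2q]].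
    destruct (Htot G1 G2 F1 F2) as [S|S].
    - exists G2. split; [auto|split; [|split; auto]].
      apply (pg_or_empty_nonempty G2 q); auto.
    - exists G1. split; [auto|split; [|split; auto]].
      apply (pg_or_empty_nonempty G1 p); auto. }
  left. split.
  - intros u a b Ha Hb. destruct (two _ _ Ha Hb) as [G [_ [PG [? ?]]]]. eapply pg_fun; eauto.
  - destruct (two _ _ Hp0 Hp0) as [G [FG [PG _]]]. apply HU. exists G. split; auto. apply PG.
  - intros u a v b Ha Hb. destruct (two _ _ Ha Hb) as [G [FG [PG [? ?]]]].
    apply HU. exists G. split; auto. apply PG; auto.
  - intros r u a Ha. destruct (two _ _ Ha Ha) as [G [FG [PG [? _]]]].
    apply HU. exists G. split; auto. apply PG; auto.
  - intros u a Ha. destruct (two _ _ Ha Ha) as [G [_ [PG [? _]]]]. eapply pg_dom; eauto.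
Qed.

(** The value c on a new direction y must satisfy these two bounds; they are compatible
    because b + a <= ‖u + v‖ <= ‖u + y‖ + ‖v - y‖. *)
Lemma extension_constant A y : partial_graph X x0 A ->
  exists c, (forall v b, A (v, b) -> b - vnorm (vsub v y) <= c) /\
            (forall u a, A (u, a) -> c <= vnorm (vadd u y) - a).
Proof.
  intro PA.
  assert (A00 : A (vzero X, 0)).
  { pose proof (pg_scal _ _ _ PA 0 _ _ (pg_x0 _ _ _ PA)). rewrite rs0, Rmult_0_l in H. exact H. }
  assert (Bnd : forall u a v b, A (u, a) -> A (v, b) ->
                  b - vnorm (vsub v y) <= vnorm (vadd u y) - a).
  { intros u a v b Ha Hb. pose proof (pg_dom _ _ _ PA _ _ (pg_add _ _ _ PA _ _ _ _ Ha Hb)).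
    assert (E : vadd u v = vadd (vadd u y) (vsub v y)).
    { unfold vsub. rewrite vaddACA, vaddN, vadd0. reflexivity. }
    rewrite E in H. pose proof (vnorm_tri (vadd u y) (vsub v y)). lra. }
  set (S := fun r => exists v b, A (v, b) /\ r = b - vnorm (vsub v y)).
  assert (HS : is_lub S (Rsup S)).
  { apply Rsup_spec.
    - exists (0 - vnorm (vsub (vzero X) y)), (vzero X), 0. auto.
    - exists (vnorm (vadd (vzero X) y) - 0). intros r [v [b [Hv ->]]]. apply Bnd; auto. }
  exists (Rsup S). split.
  - intros v b H. apply (lub_le S _ _ HS). exists v, b. auto.
  - intros u a H. apply (lub_least S _ _ HS). intros r [v [b [Hv ->]]]. apply Bnd; auto.
Qed.

Definition extend (A : X * R -> Prop) (y : X) (c : R) : X * R -> Prop :=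
  fun p => exists u a t, A (u, a) /\ p = (vadd u (rs t y), a + t * c).

(** The extension is still dominated by the norm: for t > 0 (t < 0) this is the upper
    (lower) bound on c applied to (u/t, a/t) (resp. to (u/(-t), a/(-t))). *)
Lemma extend_dominated A y c u a t : partial_graph X x0 A ->
  (forall v b, A (v, b) -> b - vnorm (vsub v y) <= c) ->
  (forall v b, A (v, b) -> c <= vnorm (vadd v y) - b) ->
  A (u, a) -> a + t * c <= vnorm (vadd u (rs t y)).
Proof.
  intros PA Hlow Hup Ha.
  destruct (Rtotal_order t 0) as [Hn|[Hz|Hp]].
  - set (s := - t). assert (Hs : 0 < s) by (unfold s; lra).
    pose proof (Hlow _ _ (pg_scal _ _ _ PA (/ s) _ _ Ha)).
    assert (E : rs s (vsub (rs (/ s) u) y) = vadd u (rs t y)).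
    { rewrite rs_sub, rs_mul, Rinv_r, rs1 by lra. unfold vsub. f_equal.
      replace t with (- s) by (unfold s; ring). rewrite rs_opp. reflexivity. }
    rewrite <- E, rs_norm, Rabs_right by lra.
    apply Rmult_le_compat_l with (r := s) in H; [|lra].
    replace (s * (/ s * a - vnorm (vsub (rs (/ s) u) y))) with
      (a - s * vnorm (vsub (rs (/ s) u) y)) in H by (field; lra).
    replace t with (- s) by (unfold s; ring). lra.
  - subst. rewrite rs0, vadd0, Rmult_0_l, Rplus_0_r. apply (pg_dom _ _ _ PA _ _ Ha).
  - pose proof (Hup _ _ (pg_scal _ _ _ PA (/ t) _ _ Ha)).
    assert (E : rs t (vadd (rs (/ t) u) y) = vadd u (rs t y)).
    { rewrite rs_addr, rs_mul, Rinv_r, rs1 by lra. reflexivity. }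
    rewrite <- E, rs_norm, Rabs_right by lra.
    apply Rmult_le_compat_l with (r := t) in H; [|lra].
    replace (t * (vnorm (vadd (rs (/ t) u) y) - / t * a)) with
      (t * vnorm (vadd (rs (/ t) u) y) - a) in H by (field; lra). lra.
Qed.

(** The extension is functional as long as y lies outside the domain of A: two
    representations u + t y = u' + t' y with t <> t' would put y in that domain. *)
Lemma extend_functional A y c : partial_graph X x0 A -> (forall c', ~ A (y, c')) ->
  forall w e1 e2, extend A y c (w, e1) -> extend A y c (w, e2) -> e1 = e2.
Proof.
  intros PA Hy w e1 e2 [u [a [t [Ha E1]]]] [u' [a' [t' [Ha' E2]]]].
  injection E1 as E1 F1. injection E2 as E2 F2. subst e1 e2. rewrite E1 in E2.
  destruct (Req_dec t t') as [Ht|Ht].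
  - subst t'. apply add_cancel_r in E2. subst u'. rewrite (pg_fun _ _ _ PA _ _ _ Ha Ha'). reflexivity.
  - exfalso. set (d := t - t').
    assert (Ed : vadd u (rs d y) = u').
    { replace t with (d + t') in E2 by (unfold d; ring).
      rewrite rs_add, vaddA in E2. apply add_cancel_r in E2. exact E2. }
    apply (Hy (/ d * (a' + - a))).
    replace y with (rs (/ d) (vsub u' u)) by (rewrite <- Ed, sub_add_l, rs_mul, Rinv_l, rs1;
      [reflexivity | unfold d; lra]).
    apply (pg_scal _ _ _ PA). apply (pg_add _ _ _ PA); auto.
    pose proof (pg_scal _ _ _ PA (- (1)) _ _ Ha). rewrite rs_opp, rs1 in H.
    replace (- a) with (- (1) * a) by ring. exact H.
Qed.

Lemma partial_graph_extend A y : partial_graph X x0 A -> (forall c, ~ A (y, c)) ->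
  exists A', partial_graph X x0 A' /\ classical_sets.proper A A'.
Proof.
  intros PA Hy. destruct (extension_constant A y PA) as [c [Hlow Hup]].
  exists (extend A y c). split; [split|split].
  - apply extend_functional; auto.
  - exists x0, (vnorm x0), 0. split; [apply PA|]. rewrite rs0, vadd0. f_equal; ring.
  - intros w e v b [u [a [t [Ha E1]]]] [u' [a' [t' [Ha' E2]]]].
    injection E1 as E1 F1. injection E2 as E2 F2. subst.
    exists (vadd u u'), (a + a'), (t + t'). split; [apply PA; auto|].
    rewrite rs_add, vaddACA. f_equal. ring.
  - intros r w e [u [a [t [Ha E1]]]]. injection E1 as E1 F1. subst.
    exists (rs r u), (r * a), (r * t). split; [apply PA; auto|].
    rewrite rs_addr, rs_mul. f_equal. ring.
  - intros w e [u [a [t [Ha E1]]]]. injection E1 as E1 F1. subst.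
    apply (extend_dominated A y c u a t); auto.
  - intros [u a] Ha. exists u, a, 0. split; auto. rewrite rs0, vadd0. f_equal; ring.
  - intro Hs. apply (Hy c). apply Hs. exists (vzero X), 0, 1. split.
    + pose proof (pg_scal _ _ _ PA 0 _ _ (pg_x0 _ _ _ PA)). rewrite rs0, Rmult_0_l in H. exact H.
    + rewrite rs1, add0l. f_equal; ring.
Qed.

Lemma line_partial_graph : x0 <> vzero X ->
  partial_graph X x0 (fun p => exists r, p = (rs r x0, r * vnorm x0)).
Proof.
  intro Hx0. pose proof (norm_pos0 x0 Hx0). split.
  - intros u a b [r Er] [s Es]. injection Er as E1 E2. injection Es as E3 E4. subst.
    assert (H0 : vnorm (rs (r - s) x0) = 0).
    { unfold Rminus. rewrite rs_add, rs_opp, E3, vaddN. apply norm0. }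
    rewrite rs_norm in H0. destruct (Req_dec (r - s) 0) as [Hrs|Hrs].
    + replace r with s by lra. reflexivity.
    + exfalso. pose proof (Rabs_pos_lt _ Hrs). nra.
  - exists 1. rewrite rs1. f_equal; ring.
  - intros u a v b [r Er] [s Es]. injection Er as E1 E2. injection Es as E3 E4. subst.
    exists (r + s). rewrite rs_add. f_equal; ring.
  - intros t u a [r Er]. injection Er as E1 E2. subst. exists (t * r). rewrite rs_mul. f_equal; ring.
  - intros u a [r Er]. injection Er as E1 E2. subst. rewrite rs_norm.
    pose proof (Rle_abs r). nra.
Qed.

Lemma total_partial_graph : x0 <> vzero X ->
  exists A, partial_graph X x0 A /\ forall y, exists c, A (y, c).
Proof.
  intro Hx0.
  destruct (@classical_sets.Zorn_bigcup _ pg_or_empty chain_union) as [A [PA Amax]].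
  assert (QA : partial_graph X x0 A).
  { destruct PA as [Q|E]; auto. exfalso.
    pose proof (line_partial_graph Hx0) as PL.
    apply (Amax (fun p => exists r, p = (rs r x0, r * vnorm x0))).
    - split.
      + intros p Hp. exfalso. apply (E p Hp).
      + intro H. apply (E (x0, vnorm x0)), H, PL.
    - left. exact PL. }
  exists A. split; auto. intro y. apply NNPP. intro Hn.
  destruct (partial_graph_extend A y QA) as [A' [QA' PAA']].
  - intros c Hc. apply Hn. eauto.
  - apply (Amax A' PAA'). left; auto.
Qed.

Lemma hahn_banach_real : x0 <> vzero X ->
  exists g : X -> R, (forall a b, g (vadd a b) = g a + g b) /\
    (forall r a, g (rs r a) = r * g a) /\ g x0 = vnorm x0 /\ (forall z, g z <= vnorm z).
Proof.
  intro Hx0. destruct (total_partial_graph Hx0) as [A [PA Htot]].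
  set (g := fun y => proj1_sig (constructive_indefinite_description _ (Htot y))).
  assert (Hg : forall y, A (y, g y)).
  { intro y. unfold g. destruct constructive_indefinite_description; simpl; auto. }
  exists g. split; [|split; [|split]].
  - intros a b. apply (pg_fun _ _ _ PA (vadd a b)); auto. apply PA; auto.
  - intros r a. apply (pg_fun _ _ _ PA (rs r a)); auto. apply PA; auto.
  - apply (pg_fun _ _ _ PA x0); auto. apply PA.
  - intro z. apply (pg_dom _ _ _ PA); auto.
Qed.

End HahnBanach.

(** ** Linear functionals and supporting functionals *)

Section Duality.
Context {k : kind} (X : BanachSpace k).

Lemma lin_add f : is_linear_functional X f -> forall a b, f (vadd a b) = sadd k (f a) (f b).
Proof. intros [H _]; exact H. Qed.

Lemma lin_scal f : is_linear_functional X f -> forall a x, f (vscal a x) = smul k a (f x).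
Proof. intros [_ H]; exact H. Qed.

Lemma lin_Re_add f : is_linear_functional X f ->
  forall a b, sRe k (f (vadd a b)) = sRe k (f a) + sRe k (f b).
Proof. intros H a b. rewrite (lin_add f H), sRe_add. reflexivity. Qed.

Lemma lin_Re_rs f : is_linear_functional X f -> forall r a, sRe k (f (rs r a)) = r * sRe k (f a).
Proof. intros H r a. unfold rs. rewrite (lin_scal f H), sRe_mull. reflexivity. Qed.

Lemma lin_zero f : is_linear_functional X f -> sabs k (f (vzero X)) = 0.
Proof.
  intro H. rewrite <- (vscal_s0 (vzero X)), (lin_scal f H), sabs_mul.
  unfold s0. rewrite sabs_sofR, Rabs_R0. ring.
Qed.

(** Every real-linear functional is the real part of a K-linear one
    (over C: f z = g z - i g (i z)). *)
Lemma real_part_lift (g : X -> R) :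
  (forall a b, g (vadd a b) = g a + g b) -> (forall r a, g (rs r a) = r * g a) ->
  exists f, is_linear_functional X f /\ forall z, sRe k (f z) = g z.
Proof.
  revert X g. destruct k; intros X g gadd gscal.
  - exists g. repeat split; auto.
  - set (i := mkC 0 1 : Scal ComplexK).
    assert (decomp : forall c d (z : X),
              vscal (mkC c d : Scal ComplexK) z = vadd (rs c z) (rs d (vscal i z))).
    { intros c d z. unfold rs. rewrite (vscalA (sofR ComplexK d) i z), <- vscalDl.
      f_equal. simpl. unfold Cadd, Cmul; simpl. f_equal; ring. }
    exists (fun z => mkC (g z) (- g (vscal i z))). split; [split|reflexivity].
    + intros a b. simpl. unfold Cadd. rewrite vscalDr, !gadd. simpl. f_equal. ring.
    + intros [a b] x. rewrite (vscalA i).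
      replace (smul ComplexK i (mkC a b)) with (mkC (0 * a - 1 * b) (0 * b + 1 * a) : Scal ComplexK)
        by (unfold i; reflexivity).
      rewrite (decomp a b x), (decomp (0 * a - 1 * b) (0 * b + 1 * a) x), !gadd, !gscal.
      simpl. unfold Cmul; simpl. f_equal; ring.
Qed.

(** A linear functional whose real part is dominated by the norm is dominated in modulus:
    rotate f z onto |f z| by a unimodular scalar. *)
Lemma re_dominated_bound f : is_linear_functional X f ->
  (forall z, sRe k (f z) <= vnorm z) -> forall z, sabs k (f z) <= vnorm z.
Proof.
  intros Hlin Hre z. destruct (unit_rotation k (f z)) as [a [Ha Ea]].
  rewrite <- Ea, <- (lin_scal f Hlin). eapply Rle_trans; [apply Hre|].
  rewrite vnormZ, Ha. lra.
Qed.

Lemma sRe_eq_abs z : sabs k z <= sRe k z -> z = sofR k (sabs k z).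
Proof.
  destruct k; simpl; intro H.
  - change R in z. rewrite Rabs_right; [reflexivity|]. pose proof (Rabs_pos z). lra.
  - destruct z as [p q]. unfold Cabs in *; cbn [cre cim] in *.
    assert (Hs : sqrt (p ^ 2 + q ^ 2) * sqrt (p ^ 2 + q ^ 2) = p ^ 2 + q ^ 2)
      by (apply sqrt_sqrt; nra).
    pose proof (sqrt_pos (p ^ 2 + q ^ 2)).
    assert (q = 0) by nra. subst q.
    f_equal. apply Rle_antisym; [|lra]. nra.
Qed.

Lemma hahn_banach x0 : x0 <> vzero X ->
  exists f, is_linear_functional X f /\
    (forall z, sabs k (f z) <= vnorm z) /\ f x0 = sofR k (vnorm x0).
Proof.
  intro Hx0. destruct (hahn_banach_real X x0 Hx0) as [g [gadd [gscal [gx0 gle]]]].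
  destruct (real_part_lift g gadd gscal) as [f [Hlin Hre]].
  assert (Hb : forall z, sabs k (f z) <= vnorm z)
    by (apply re_dominated_bound; auto; intro z; rewrite Hre; auto).
  exists f. split; [auto|split; [auto|]].
  assert (E : sabs k (f x0) = vnorm x0).
  { apply Rle_antisym; auto. rewrite <- gx0, <- Hre. apply sRe_le_abs. }
  rewrite <- E. apply sRe_eq_abs. rewrite E, Hre, gx0. lra.
Qed.

Lemma dual_norm_lub f : in_dual X f ->
  is_lub (fun r => exists x : X, vnorm x <= 1 /\ r = sabs k (f x)) (dual_norm X f).
Proof.
  intros [Hlin [M HM]]. apply Rsup_spec.
  - exists (sabs k (f (vzero X))), (vzero X). rewrite norm0. split; [lra|auto].
  - exists (Rabs M). intros r [x [Hx ->]]. pose proof (HM x). pose proof (norm_ge0 x).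
    pose proof (Rle_abs M). pose proof (Rabs_pos M). nra.
Qed.

Lemma dual_norm_bound f v : in_dual X f -> sabs k (f v) <= dual_norm X f * vnorm v.
Proof.
  intro Hf. pose proof (dual_norm_lub f Hf) as HL. destruct Hf as [Hlin _].
  destruct (norm_ge0 v) as [Hv|Hv].
  - set (v1 := rs (/ vnorm v) v).
    assert (N1 : vnorm v1 = 1).
    { unfold v1. rewrite rs_norm, Rabs_right. field. lra. left. apply Rinv_0_lt_compat; lra. }
    assert (H : sabs k (f v1) <= dual_norm X f)
      by (apply (lub_le _ _ _ HL); exists v1; split; [lra|auto]).
    unfold v1, rs in H. rewrite (lin_scal f Hlin), sabs_mul, sabs_sofR, Rabs_right in H.
    2:{ left. apply Rinv_0_lt_compat; lra. }
    apply Rmult_le_compat_l with (r := vnorm v) in H; [|lra].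
    replace (vnorm v * (/ vnorm v * sabs k (f v))) with (sabs k (f v)) in H by (field; lra). lra.
  - symmetry in Hv. apply vnorm_eq0 in Hv. subst v. rewrite lin_zero, norm0; auto. lra.
Qed.

(** D(u) is nonempty for u <> 0: scale a Hahn–Banach functional at u by ‖u‖. *)
Lemma supporting_functional u : u <> vzero X -> exists f, Dset X u f.
Proof.
  intro Hu. destruct (hahn_banach u Hu) as [f [Hlin [Hb Hfu]]].
  set (c := vnorm u). assert (cpos : 0 < c) by (apply norm_pos0; auto).
  set (F := fun z => smul k (sofR k c) (f z)).
  assert (FLin : is_linear_functional X F).
  { split; intros; unfold F.
    - rewrite (lin_add f Hlin). apply smul_addr.
    - rewrite (lin_scal f Hlin). apply smul_swap. }
  assert (Fb : forall z, sabs k (F z) <= c * vnorm z).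
  { intro z. unfold F. rewrite sabs_mul, sabs_sofR, Rabs_right by lra.
    apply Rmult_le_compat_l; [lra|auto]. }
  assert (Fu : F u = sofR k (c * c)) by (unfold F; rewrite Hfu; apply smul_sofR).
  assert (Dn : dual_norm X F = c).
  { apply Rsup_lub. split.
    - intros r [x [Hx ->]]. pose proof (Fb x). pose proof (norm_ge0 x). nra.
    - intros b Hb'. apply Hb'. exists (rs (/ c) u). split.
      + rewrite rs_norm, Rabs_right. fold c. right. field. lra.
        left. apply Rinv_0_lt_compat. lra.
      + unfold rs. rewrite (lin_scal F FLin), Fu, smul_sofR, sabs_sofR.
        replace (/ c * (c * c)) with c by (field; lra). rewrite Rabs_right; lra. }
  exists F. split; [split; [auto|exists c; auto]|].
  rewrite Dn. split; [exact Fu | fold c; simpl; ring].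
Qed.

Lemma Dset_props u f : Dset X u f -> u <> vzero X ->
  is_linear_functional X f /\ (forall v, sabs k (f v) <= vnorm u * vnorm v) /\
  f u = sofR k (vnorm u ^ 2).
Proof.
  intros [Hf [Hfu Hdn]] Hu.
  assert (upos : 0 < vnorm u) by (apply norm_pos0; auto).
  assert (Dn : dual_norm X f = vnorm u).
  { simpl in Hdn. apply (Rmult_eq_reg_r (vnorm u)); [|lra]. rewrite Hdn. ring. }
  split; [apply Hf|split].
  - intro v. rewrite <- Dn. apply dual_norm_bound, Hf.
  - rewrite Hfu, Hdn. reflexivity.
Qed.

End Duality.

(** ** Lipschitz constants *)

Section Lipschitz.
Context {k : kind} (X : BanachSpace k).
Hypothesis hX : exists x : X, x <> vzero X.

Definition Lipb (A : X -> X) (c : R) :=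
  forall x y : X, vnorm (vsub (A x) (A y)) <= c * vnorm (vsub x y).

Lemma Lip0_Lipb T : Lip0 X T -> exists c, Lipb T c.
Proof. intros [_ [c H]]. exists c. exact H. Qed.

Lemma lip_lub A c : Lipb A c -> is_lub (fun r => exists x y : X, x <> y /\
  r = vnorm (vsub (A x) (A y)) / vnorm (vsub x y)) (lipnorm X A).
Proof.
  intro H. apply Rsup_spec.
  - destruct hX as [x Hx]. eexists. exists x, (vzero X). split; eauto.
  - exists c. intros r [x [y [Hxy ->]]]. pose proof (norm_pos x y Hxy).
    apply (Rmult_le_reg_r (vnorm (vsub x y))); auto. unfold Rdiv.
    rewrite Rmult_assoc, Rinv_l, Rmult_1_r by lra. apply H.
Qed.

Lemma lip_bound A c : Lipb A c -> Lipb A (lipnorm X A).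
Proof.
  intros H x y. destruct (classic (x = y)) as [->|Hxy].
  - rewrite !subxx, norm0. lra.
  - pose proof (norm_pos x y Hxy).
    assert (vnorm (vsub (A x) (A y)) / vnorm (vsub x y) <= lipnorm X A)
      by (apply (lub_le _ _ _ (lip_lub A c H)); exists x, y; auto).
    apply Rmult_le_compat_r with (r := vnorm (vsub x y)) in H1; [|lra].
    unfold Rdiv in H1. rewrite Rmult_assoc, Rinv_l, Rmult_1_r in H1 by lra. lra.
Qed.

Lemma lip_least A c d : Lipb A c -> Lipb A d -> lipnorm X A <= d.
Proof.
  intros H Hd. apply (lub_least _ _ _ (lip_lub A c H)).
  intros r [x [y [Hxy ->]]]. pose proof (norm_pos x y Hxy).
  apply (Rmult_le_reg_r (vnorm (vsub x y))); auto. unfold Rdiv.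
  rewrite Rmult_assoc, Rinv_l, Rmult_1_r by lra. apply Hd.
Qed.

Lemma lip_approx A c eps : Lipb A c -> 0 < eps -> exists x y, x <> y /\
  (lipnorm X A - eps) * vnorm (vsub x y) < vnorm (vsub (A x) (A y)).
Proof.
  intros H He. destruct (lub_approx _ _ eps (lip_lub A c H) He) as [r [[x [y [Hxy ->]]] Hr]].
  exists x, y. split; auto. pose proof (norm_pos x y Hxy).
  apply Rmult_lt_compat_r with (r := vnorm (vsub x y)) in Hr; auto.
  unfold Rdiv in Hr. rewrite Rmult_assoc, Rinv_l, Rmult_1_r in Hr by lra. exact Hr.
Qed.

Lemma lip_ge0 A c : Lipb A c -> 0 <= lipnorm X A.
Proof.
  intro H. destruct hX as [x Hx]. pose proof (norm_pos x (vzero X) Hx).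
  apply Rle_trans with (vnorm (vsub (A x) (A (vzero X))) / vnorm (vsub x (vzero X))).
  - unfold Rdiv. apply Rmult_le_pos; [apply norm_ge0|]. left. apply Rinv_0_lt_compat; auto.
  - apply (lub_le _ _ _ (lip_lub A c H)). exists x, (vzero X). auto.
Qed.

Lemma lipnorm_Lipb T : Lip0 X T -> Lipb T (lipnorm X T).
Proof. intro HT. destruct (Lip0_Lipb T HT) as [c Hc]. exact (lip_bound T c Hc). Qed.

Lemma lipnorm_ge0 T : Lip0 X T -> 0 <= lipnorm X T.
Proof. intro HT. destruct (Lip0_Lipb T HT) as [c Hc]. exact (lip_ge0 T c Hc). Qed.

Lemma sub_IplusT a T (x y : X) : vsub (IplusT X a T x) (IplusT X a T y) =
  vadd (vsub x y) (vscal a (vsub (T x) (T y))).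
Proof. unfold IplusT. rewrite sub_add_add, scal_sub. reflexivity. Qed.

Lemma IplusT_Lipb a T c : Lipb T c -> Lipb (IplusT X a T) (1 + sabs k a * c).
Proof.
  intros H x y. rewrite sub_IplusT. eapply Rle_trans; [apply vnorm_tri|]. rewrite vnormZ.
  pose proof (H x y). pose proof (sabs_ge0 k a).
  assert (sabs k a * vnorm (vsub (T x) (T y)) <= sabs k a * (c * vnorm (vsub x y)))
    by (apply Rmult_le_compat_l; auto). lra.
Qed.

Lemma lipnorm_IplusT_le a T : Lip0 X T ->
  lipnorm X (IplusT X a T) <= 1 + sabs k a * lipnorm X T.
Proof.
  intro HT. destruct (Lip0_Lipb T HT) as [c Hc].
  apply (lip_least _ _ _ (IplusT_Lipb a T c Hc)), IplusT_Lipb, lipnorm_Lipb, HT.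
Qed.

Lemma identity_Lip0 : Lip0 X (fun x => x) /\ lipnorm X (fun x => x) = 1.
Proof.
  assert (Hb : Lipb (fun x : X => x) 1) by (intros x y; lra).
  split; [split; [reflexivity | exists 1; exact Hb]|].
  apply Rle_antisym; [exact (lip_least _ 1 1 Hb Hb)|].
  destruct hX as [x Hx]. pose proof (norm_pos x (vzero X) Hx).
  apply Rle_trans with (vnorm (vsub x (vzero X)) / vnorm (vsub x (vzero X))).
  - right. field. lra.
  - apply (lub_le _ _ _ (lip_lub _ 1 Hb)). exists x, (vzero X). auto.
Qed.

End Lipschitz.

(** ** The numerical range W(T) *)

Section NumericalRange.
Context {k : kind} (X : BanachSpace k).
Hypothesis hX : exists x : X, x <> vzero X.
Variable T : X -> X.
Hypothesis HT : Lip0 X T.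

(** |λ| <= ‖T‖_L on W(T): |f(Tx - Ty)| <= ‖x - y‖ ‖Tx - Ty‖ for f ∈ D(x - y). *)
Lemma W_abs_le l : Wset X T l -> sabs k l <= lipnorm X T.
Proof.
  intros [x [y [f [Hxy [HD ->]]]]].
  destruct (Dset_props X _ f HD (sub_neq0 x y Hxy)) as [_ [Hb _]].
  pose proof (norm_pos x y Hxy) as Np. pose proof (lipnorm_Lipb X hX T HT x y) as HL.
  set (n := vnorm (vsub x y)) in *. set (L := lipnorm X T) in *.
  rewrite sabs_mul, sabs_sofR, Rabs_right by (left; apply Rinv_0_lt_compat, pow_lt; auto).
  apply (Rmult_le_reg_r (n ^ 2)); [apply pow_lt; auto|].
  rewrite Rmult_assoc, Rinv_l, Rmult_1_r by (apply pow_nonzero; lra).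
  eapply Rle_trans; [apply Hb|]. fold n. simpl. pose proof (norm_ge0 (vsub (T x) (T y))). nra.
Qed.

(** W(T) is nonempty: D(x) <> ∅ for any x <> 0. *)
Lemma W_nonempty : exists l, Wset X T l.
Proof.
  destruct hX as [x Hx]. destruct (supporting_functional X _ (sub_neq0 x (vzero X) Hx)) as [f Hf].
  eexists. exists x, (vzero X), f. split; [auto|split; [exact Hf|reflexivity]].
Qed.

Lemma supReW_lub : is_lub (fun r => exists l, Wset X T l /\ r = sRe k l) (supReW X T).
Proof.
  apply Rsup_spec.
  - destruct W_nonempty as [l Hl]. eauto.
  - exists (lipnorm X T). intros r [l [Hl ->]].
    eapply Rle_trans; [apply sRe_le_abs|]. apply W_abs_le, Hl.
Qed.

Lemma omega_lub : is_lub (fun r => exists l, Wset X T l /\ r = sabs k l) (omega X T).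
Proof.
  apply Rsup_spec.
  - destruct W_nonempty as [l Hl]. eauto.
  - exists (lipnorm X T). intros r [l [Hl ->]]. apply W_abs_le, Hl.
Qed.

Lemma supReW_bounds : - lipnorm X T <= supReW X T <= lipnorm X T.
Proof.
  split.
  - destruct W_nonempty as [l Hl]. apply Rle_trans with (sRe k l).
    + pose proof (W_abs_le l Hl). pose proof (sRe_ge_mabs k l). lra.
    + apply (lub_le _ _ _ supReW_lub). eauto.
  - apply (lub_least _ _ _ supReW_lub). intros r [l [Hl ->]].
    eapply Rle_trans; [apply sRe_le_abs|]. apply W_abs_le, Hl.
Qed.

Lemma omega_bounds : 0 <= omega X T <= lipnorm X T.
Proof.
  split.
  - destruct W_nonempty as [l Hl]. apply Rle_trans with (sabs k l); [apply sabs_ge0|].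
    apply (lub_le _ _ _ omega_lub). eauto.
  - apply (lub_least _ _ _ omega_lub). intros r [l [Hl ->]]. apply W_abs_le, Hl.
Qed.

(** Testing I + aT on the
    pair (x, y) defining λ = f(Tx - Ty)/‖x - y‖² with f ∈ D(x - y) gives
    ‖x - y‖² + Re(a f(Tx - Ty)) = Re f((I + aT)x - (I + aT)y) <= ‖x - y‖² ‖I + aT‖_L. *)
Lemma numrange_lower_bound a l : Wset X T l -> 1 + sRe k (smul k a l) <= lipnorm X (IplusT X a T).
Proof.
  intros [x [y [f [Hxy [HD ->]]]]].
  destruct (Lip0_Lipb X T HT) as [c Hc].
  pose proof (lip_bound X hX _ _ (IplusT_Lipb X a T c Hc) x y) as HB.
  rewrite sub_IplusT in HB.
  destruct (Dset_props X _ f HD (sub_neq0 x y Hxy)) as [Hlin [Hb Hfu]].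
  pose proof (norm_pos x y Hxy) as Np.
  set (u := vsub x y) in *. set (w := vsub (T x) (T y)) in *. set (n := vnorm u) in *.
  set (Lp := lipnorm X (IplusT X a T)) in *.
  assert (E : sRe k (f (vadd u (vscal a w))) = n ^ 2 + sRe k (smul k a (f w))).
  { rewrite (lin_Re_add X f Hlin), Hfu, sRe_sofR, (lin_scal X f Hlin). reflexivity. }
  assert (Hle : n ^ 2 + sRe k (smul k a (f w)) <= n * (Lp * n)).
  { rewrite <- E. eapply Rle_trans; [apply sRe_le_abs|]. eapply Rle_trans; [apply Hb|].
    apply Rmult_le_compat_l; lra. }
  rewrite sRe_mulA_sofR.
  apply (Rplus_le_reg_l (- 1)). apply (Rmult_le_reg_r (n ^ 2)); [apply pow_lt; auto|].
  replace ((-1 + (1 + sRe k (smul k a (f w)) * / n ^ 2)) * n ^ 2)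
    with (sRe k (smul k a (f w))) by (field; lra).
  simpl in *. nra.
Qed.

End NumericalRange.

(** The numerical inequality behind (a): if (1 + s(L - s))(1 - sM) <= 1 + s²L² for all small
    s > 0, then L <= M.  Expanding, L - M <= s (L² + LM + 1 - sM) <= s (2L² + 2). *)
Lemma quadratic_limit (L M : R) : 0 <= L -> - L <= M <= L ->
  (forall s, 0 < s <= 1 -> s * L <= 1 -> (1 + s * (L - s)) * (1 - s * M) <= 1 + s ^ 2 * L ^ 2) ->
  L <= M.
Proof.
  intros HL HM H. apply Rnot_lt_le. intro Hlt.
  set (d := L - M). set (C := 2 * L ^ 2 + 2). set (s := d / (2 * C)).
  assert (Cp : 0 < C) by (unfold C; nra).
  assert (sC : s * (2 * C) = d) by (unfold s; field; lra).
  assert (sp : 0 < s) by (unfold s, d; apply Rdiv_lt_0_compat; lra).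
  assert (d2L : d <= 2 * L) by (unfold d; lra).
  assert (s1 : s <= 1).
  { assert (s * (2 * C) <= 1 * (2 * C)) by (rewrite sC; unfold C; nra).
    apply Rmult_le_reg_r in H0; lra. }
  assert (sL : s * L <= 1).
  { assert (s * L * (2 * C) <= 1 * (2 * C)).
    { replace (s * L * (2 * C)) with (d * L) by (rewrite <- sC; ring). unfold C. nra. }
    apply Rmult_le_reg_r in H0; lra. }
  specialize (H s (conj sp s1) sL).
  assert (Hd : d <= s * (L ^ 2 + L * M + 1 - s * M)).
  { apply (Rmult_le_reg_l s); [exact sp|]. unfold d. simpl in *. nra. }
  assert (HB : L ^ 2 + L * M + 1 - s * M <= C) by (unfold C; simpl in *; nra).
  assert (s * (L ^ 2 + L * M + 1 - s * M) <= s * C) by (apply Rmult_le_compat_l; lra).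
  unfold d in *. lra.
Qed.

Lemma IplusT_s1 {k} (X : BanachSpace k) (T : X -> X) :
  (fun x => vadd x (T x)) = IplusT X (s1 k) T.
Proof. apply functional_extensionality. intro x. unfold IplusT. rewrite vscal1. reflexivity. Qed.

Section PartA.
Context {k : kind} (X : BanachSpace k).
Hypothesis hX : exists x : X, x <> vzero X.
Variable T : X -> X.
Hypothesis HT : Lip0 X T.

(** (a), "⇐": the triangle inequality and the key lower bound with a = 1. *)
Lemma partA_if : supReW X T = lipnorm X T -> lipnorm X (IplusT X (s1 k) T) = 1 + lipnorm X T.
Proof.
  intro HM. apply Rle_antisym.
  - pose proof (lipnorm_IplusT_le X hX (s1 k) T HT) as H.
    unfold s1 in H. rewrite sabs_sofR, Rabs_R1, Rmult_1_l in H. exact H.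
  - apply le_epsilon. intros eps He.
    destruct (lub_approx _ _ eps (supReW_lub X hX T HT) He) as [r [[l [Hl ->]] Hr]].
    pose proof (numrange_lower_bound X hX T HT (s1 k) l Hl) as H. rewrite smul_s1 in H. lra.
Qed.

(** Moving z' to z' - s(Tz - Tz') turns z - z' into u' = u + s w (u = z - z',
    w = Tz - Tz').  Evaluating f ∈ D(u') and using Re f(Tz - T(z' - sw)) <= M‖u'‖² gives
    ‖u'‖ (1 - sM) <= ‖u‖ (1 + s²L²), with L = ‖T‖_L and M = sup Re W(T). *)
Lemma shift_estimate z z' s : 0 <= s ->
  vadd (vsub z z') (rs s (vsub (T z) (T z'))) <> vzero X ->
  vnorm (vadd (vsub z z') (rs s (vsub (T z) (T z')))) * (1 - s * supReW X T) <=
  vnorm (vsub z z') * (1 + s ^ 2 * lipnorm X T ^ 2).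
Proof.
  intros s0 Hu'. pose proof (lipnorm_Lipb X hX T HT) as HL. pose proof (lipnorm_ge0 X hX T HT) as L0.
  set (u := vsub z z') in *. set (w := vsub (T z) (T z')) in *.
  set (u' := vadd u (rs s w)) in *. set (y' := vsub z' (rs s w)).
  set (L := lipnorm X T) in *. set (M := supReW X T).
  set (a := vnorm u). set (b := vnorm u').
  assert (Ezy : vsub z y' = u') by (unfold y', u'; rewrite sub_sub_r; reflexivity).
  assert (bp : 0 < b) by (apply norm_pos0, Hu').
  assert (Hzy : z <> y') by (intro E; apply Hu'; rewrite <- Ezy, E; apply subxx).
  destruct (supporting_functional X u' Hu') as [f HD].
  destruct (Dset_props X u' f HD Hu') as [Hlin [Hb Hfu]]. fold b in Hb, Hfu.
  (* Re f(Tz - Ty') <= M b², since f(Tz - Ty')/b² ∈ W(T) *)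
  assert (HW : sRe k (f (vsub (T z) (T y'))) <= M * b ^ 2).
  { assert (Hl : sRe k (f (vsub (T z) (T y'))) * / b ^ 2 <= M).
    { rewrite <- sRe_mulr. apply (lub_le _ _ _ (supReW_lub X hX T HT)).
      eexists. split; [|reflexivity]. exists z, y', f. rewrite Ezy. auto. }
    apply (Rmult_le_compat_r (b ^ 2)) in Hl; [|apply pow_le; lra].
    rewrite Rmult_assoc, Rinv_l, Rmult_1_r in Hl by (apply pow_nonzero; lra). exact Hl. }
  (* the perturbation Tz' - Ty' is small: ‖z' - y'‖ = s‖w‖ <= s L a *)
  assert (Hsmall : Rabs (sRe k (f (vsub (T z') (T y')))) <= b * (L * (s * (L * a)))).
  { eapply Rle_trans; [apply sRe_abs_le|]. eapply Rle_trans; [apply Hb|].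
    apply Rmult_le_compat_l; [lra|]. eapply Rle_trans; [apply HL|].
    apply Rmult_le_compat_l; [exact L0|].
    unfold y'. rewrite sub_sub_r, subxx, add0l, rs_norm, Rabs_right by lra.
    apply Rmult_le_compat_l; [lra|apply HL]. }
  assert (Ew : sRe k (f (vsub (T z) (T y'))) =
               sRe k (f w) + sRe k (f (vsub (T z') (T y')))).
  { rewrite <- (lin_Re_add X f Hlin). unfold w. rewrite sub_chain. reflexivity. }
  assert (Eb : b ^ 2 = sRe k (f u) + s * sRe k (f w)).
  { rewrite <- (sRe_sofR k (b ^ 2)), <- Hfu. unfold u'.
    rewrite (lin_Re_add X f Hlin), (lin_Re_rs X f Hlin). reflexivity. }
  assert (Hfu' : sRe k (f u) <= b * a) by (eapply Rle_trans; [apply sRe_le_abs|apply Hb]).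
  pose proof (Rle_abs (- sRe k (f (vsub (T z') (T y'))))) as Hneg.
  rewrite Rabs_Ropp in Hneg.
  assert (Hfw : s * sRe k (f w) <= s * (M * b ^ 2 + b * (L * (s * (L * a)))))
    by (apply Rmult_le_compat_l; lra).
  apply (Rmult_le_reg_l b); [exact bp|]. simpl in *. nra.
Qed.

(** If ‖I + T‖_L = 1 + ‖T‖_L, the shift estimate applied to an almost extremal pair for
    I + T yields the hypothesis of [quadratic_limit]. *)
Lemma partA_quadratic : lipnorm X (IplusT X (s1 k) T) = 1 + lipnorm X T ->
  forall s, 0 < s <= 1 -> s * lipnorm X T <= 1 ->
  (1 + s * (lipnorm X T - s)) * (1 - s * supReW X T) <= 1 + s ^ 2 * lipnorm X T ^ 2.
Proof.
  intros HA s [s0 s1'] sL. pose proof (lipnorm_Lipb X hX T HT) as HL.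
  pose proof (lipnorm_ge0 X hX T HT) as L0. pose proof (supReW_bounds X hX T HT) as HM.
  destruct (Lip0_Lipb X T HT) as [c Hc].
  destruct (lip_approx X hX _ _ (s ^ 2) (IplusT_Lipb X (s1 k) T c Hc)) as [z [z' [Hzz Happ]]].
  { apply pow_lt; lra. }
  rewrite HA, sub_IplusT, vscal1 in Happ.
  set (L := lipnorm X T) in *. set (M := supReW X T) in *.
  set (u := vsub z z') in *. set (w := vsub (T z) (T z')) in *.
  set (u' := vadd u (rs s w)). set (a := vnorm u) in *. set (b := vnorm u').
  assert (ap : 0 < a) by (apply norm_pos, Hzz).
  assert (Nw : vnorm w <= L * a) by apply HL.
  (* u + w = u' + (1 - s) w, so b >= ‖u + w‖ - (1 - s) L a > (1 + s (L - s)) a *)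
  assert (Hb : (1 + s * (L - s)) * a < b).
  { assert (Eu : vadd u w = vadd u' (rs (1 - s) w)).
    { unfold u'. rewrite <- vaddA, <- rs_add. replace (s + (1 - s)) with 1 by ring.
      rewrite rs1. reflexivity. }
    pose proof (vnorm_tri u' (rs (1 - s) w)). rewrite <- Eu, rs_norm, Rabs_right in H by lra.
    assert ((1 - s) * vnorm w <= (1 - s) * (L * a)) by (apply Rmult_le_compat_l; lra).
    fold b in H. simpl in *. nra. }
  assert (Hu' : u' <> vzero X).
  { intro E. assert (b = 0) by (unfold b; rewrite E; apply norm0).
    assert (0 <= (1 + s * (L - s)) * a) by (apply Rmult_le_pos; nra). lra. }
  pose proof (shift_estimate z z' s (Rlt_le _ _ s0) Hu') as Hs. fold u w u' b a L M in Hs.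
  assert (Hm : 0 <= 1 - s * M) by nra.
  assert (Hc2 : (1 + s * (L - s)) * a * (1 - s * M) <= b * (1 - s * M))
    by (apply Rmult_le_compat_r; lra).
  apply (Rmult_le_reg_r a); [exact ap|]. nra.
Qed.

Lemma partA_only_if : lipnorm X (IplusT X (s1 k) T) = 1 + lipnorm X T ->
  supReW X T = lipnorm X T.
Proof.
  intro HA. pose proof (supReW_bounds X hX T HT) as HM.
  apply Rle_antisym; [apply HM|].
  apply quadratic_limit; [apply (lipnorm_ge0 X hX T HT) | exact HM | apply partA_quadratic, HA].
Qed.

Lemma partA : lipnorm X (fun x => vadd x (T x)) = 1 + lipnorm X T <->
  supReW X T = lipnorm X T.
Proof. rewrite IplusT_s1. split; [apply partA_only_if | apply partA_if]. Qed.

End PartA.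

(** ** Part (b): rotations of T *)

Lemma sadd_sub_cancel k a b : sadd k b (sadd k a (sopp k b)) = a.
Proof. destruct k; simpl. ring. destruct a, b; unfold Cadd, Copp; simpl; f_equal; ring. Qed.

Lemma Rabs_unit (b : R) : Rabs b = 1 -> b = 1 \/ b = - (1).
Proof. intro H. destruct (Rle_dec 0 b); [rewrite Rabs_right in H | rewrite Rabs_left in H]; lra. Qed.

Lemma rotation_lipschitz {k} (X : BanachSpace k) (hX : exists x : X, x <> vzero X) a b T :
  Lip0 X T -> lipnorm X (IplusT X a T) <=
              lipnorm X (IplusT X b T) + sabs k (sadd k a (sopp k b)) * lipnorm X T.
Proof.
  intro HT. destruct (Lip0_Lipb X T HT) as [c Hc].
  apply (lip_least X hX _ _ _ (IplusT_Lipb X a T c Hc)). intros x y.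
  set (w := vsub (T x) (T y)).
  assert (E : vsub (IplusT X a T x) (IplusT X a T y) =
              vadd (vsub (IplusT X b T x) (IplusT X b T y)) (vscal (sadd k a (sopp k b)) w)).
  { rewrite !sub_IplusT. fold w. rewrite <- vaddA, <- vscalDl, sadd_sub_cancel. reflexivity. }
  rewrite E. eapply Rle_trans; [apply vnorm_tri|]. rewrite vnormZ, Rmult_plus_distr_r.
  apply Rplus_le_compat; [apply (lip_bound X hX _ _ (IplusT_Lipb X b T c Hc))|].
  rewrite Rmult_assoc. apply Rmult_le_compat_l; [apply sabs_ge0|].
  apply (lipnorm_Lipb X hX T HT).
Qed.

(** Upper and lower half of the complex unit circle, parametrized by the real part. *)
Definition circle_point (sg x : R) : Scal ComplexK := mkC x (sg * sqrt (1 - x * x)).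

Lemma circle_point_unit sg x : Rabs sg = 1 -> -1 <= x <= 1 -> Cabs (circle_point sg x) = 1.
Proof.
  intros Hs Hx. unfold Cabs, circle_point; cbn [cre cim].
  transitivity (sqrt 1); [|apply sqrt_1]. f_equal.
  assert (sg * sg = 1) by (destruct (Rabs_unit sg Hs); subst; ring).
  replace ((sg * sqrt (1 - x * x)) ^ 2) with ((sg * sg) * (sqrt (1 - x * x) * sqrt (1 - x * x)))
    by ring.
  rewrite sqrt_sqrt by nra. rewrite H. ring.
Qed.

Lemma unit_circle_cover (z : Scal ComplexK) : Cabs z = 1 ->
  -1 <= cre z <= 1 /\ (z = circle_point 1 (cre z) \/ z = circle_point (- (1)) (cre z)).
Proof.
  destruct z as [p q]. unfold Cabs, circle_point; cbn [cre cim]. intro H.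
  assert (E : p ^ 2 + q ^ 2 = 1) by (rewrite <- (sqrt_sqrt (p ^ 2 + q ^ 2)), H by nra; ring).
  assert (Eq : sqrt (1 - p * p) = Rabs q).
  { rewrite <- sqrt_Rsqr_abs. f_equal. unfold Rsqr. simpl in E. lra. }
  split; [simpl in E; split; nra|]. rewrite Eq.
  destruct (Rle_dec 0 q); [left; rewrite Rabs_right | right; rewrite Rabs_left]; try lra;
    f_equal; ring.
Qed.

Lemma Cabs_le_sum (d1 d2 : R) : Cabs (mkC d1 d2) <= Rabs d1 + Rabs d2.
Proof.
  unfold Cabs; cbn [cre cim]. pose proof (Rabs_pos d1). pose proof (Rabs_pos d2).
  rewrite <- (sqrt_pow2 (Rabs d1 + Rabs d2)) by lra.
  apply sqrt_le_1_alt. rewrite <- (pow2_abs d1), <- (pow2_abs d2). simpl. nra.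
Qed.

Lemma continuity_pt_of_bound (G h : R -> R) (c K : R) : 0 <= K -> continuity_pt h c ->
  (forall x, Rabs (G x - G c) <= K * (Rabs (x - c) + Rabs (h x - h c))) ->
  continuity_pt G c.
Proof.
  intros HK Hh HG. unfold continuity_pt, continue_in, limit1_in, limit_in in *.
  simpl in *. unfold R_dist in *. intros eps He.
  set (e' := eps / (2 * (K + 1))).
  assert (e'p : 0 < e') by (unfold e'; apply Rdiv_lt_0_compat; lra).
  destruct (Hh e' e'p) as [d [dp Hd]].
  exists (Rmin d e'). split; [apply Rmin_pos; lra|].
  intros x [Dx Hx]. pose proof (Rmin_l d e'). pose proof (Rmin_r d e').
  assert (Hhx : Rabs (h x - h c) < e') by (apply Hd; split; auto; lra).
  eapply Rle_lt_trans; [apply HG|].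
  apply Rle_lt_trans with (K * (2 * e')); [apply Rmult_le_compat_l; lra|].
  unfold e'. apply (Rmult_lt_reg_r (K + 1)); [lra|].
  replace (K * (2 * (eps / (2 * (K + 1)))) * (K + 1)) with (eps * K) by (field; lra). nra.
Qed.

Lemma circle_point_dist sg x c :
  sabs ComplexK (sadd ComplexK (circle_point sg x) (sopp ComplexK (circle_point sg c))) <=
  Rabs (x - c) + Rabs (sg * sqrt (1 - x * x) - sg * sqrt (1 - c * c)).
Proof.
  simpl. unfold Cadd, Copp, circle_point; cbn [cre cim].
  replace (mkC (x + - c) (sg * sqrt (1 - x * x) + - (sg * sqrt (1 - c * c))))
    with (mkC (x - c) (sg * sqrt (1 - x * x) - sg * sqrt (1 - c * c))) by (f_equal; ring).
  apply Cabs_le_sum.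
Qed.

Lemma circle_norm_continuous (X : BanachSpace ComplexK) (hX : exists x : X, x <> vzero X) T sg c :
  Lip0 X T -> Rabs sg = 1 -> -1 <= c <= 1 ->
  continuity_pt (fun x => lipnorm X (IplusT X (circle_point sg x) T)) c.
Proof.
  intros HT Hsg Hc. pose proof (lipnorm_ge0 X hX T HT) as L0.
  apply (continuity_pt_of_bound _ (fun x => sg * sqrt (1 - x * x)) c (lipnorm X T) L0).
  - apply continuity_pt_mult; [apply continuity_pt_const; intros ??; reflexivity|].
    change (fun x => sqrt (1 - x * x)) with (comp sqrt (fun x => 1 - x * x)).
    apply continuity_pt_comp; [reg|apply continuity_pt_sqrt; nra].
  - intro x. cbv beta.
    pose proof (rotation_lipschitz X hX (circle_point sg x) (circle_point sg c) T HT).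
    pose proof (rotation_lipschitz X hX (circle_point sg c) (circle_point sg x) T HT).
    pose proof (circle_point_dist sg x c). pose proof (circle_point_dist sg c x).
    rewrite (Rabs_minus_sym c x), (Rabs_minus_sym (sg * sqrt (1 - c * c))) in H2.
    set (B := Rabs (x - c) + Rabs (sg * sqrt (1 - x * x) - sg * sqrt (1 - c * c))) in *.
    assert (sabs ComplexK (sadd ComplexK (circle_point sg x) (sopp ComplexK (circle_point sg c)))
              * lipnorm X T <= B * lipnorm X T) by (apply Rmult_le_compat_r; lra).
    assert (sabs ComplexK (sadd ComplexK (circle_point sg c) (sopp ComplexK (circle_point sg x)))
              * lipnorm X T <= B * lipnorm X T) by (apply Rmult_le_compat_r; lra).
    apply Rabs_le. lra.
Qed.

Section Rotations.
Context {k : kind} (X : BanachSpace k).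
Hypothesis hX : exists x : X, x <> vzero X.

(** α ↦ ‖I + αT‖_L attains its maximum on the unit sphere of K: over R the sphere is
    {1, -1}; over C it is covered by two half circles, compact intervals on which the
    map is continuous. *)
Lemma rotation_max T : Lip0 X T ->
  exists a, sabs k a = 1 /\ forall b, sabs k b = 1 ->
    lipnorm X (IplusT X b T) <= lipnorm X (IplusT X a T).
Proof.
  revert X hX T. destruct k; intros X hX T HT.
  - set (G := fun a : R => lipnorm X (IplusT X a T)).
    assert (Hb : forall b : R, Rabs b = 1 -> G b <= Rmax (G 1) (G (- (1)))).
    { intros b Hb. destruct (Rabs_unit b Hb); subst; [apply Rmax_l | apply Rmax_r]. }
    destruct (Rle_dec (G (- (1))) (G 1)).
    + exists 1. split; [apply Rabs_R1|]. intros b Hb'.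
      pose proof (Hb b Hb'). rewrite Rmax_left in H by lra. exact H.
    + exists (- (1)). split; [rewrite Rabs_Ropp; apply Rabs_R1|]. intros b Hb'.
      pose proof (Hb b Hb'). rewrite Rmax_right in H by lra. exact H.
  - set (G := fun sg x => lipnorm X (IplusT X (circle_point sg x) T)).
    assert (H1 : Rabs 1 = 1) by apply Rabs_R1.
    assert (H2 : Rabs (- (1)) = 1) by (rewrite Rabs_Ropp; apply Rabs_R1).
    destruct (continuity_ab_maj (G 1) (-1) 1) as [m1 [Hm1 Im1]]; [lra| |].
    { intros c Hc. apply (circle_norm_continuous X hX T 1 c HT H1 Hc). }
    destruct (continuity_ab_maj (G (- (1))) (-1) 1) as [m2 [Hm2 Im2]]; [lra| |].
    { intros c Hc. apply (circle_norm_continuous X hX T (- (1)) c HT H2 Hc). }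
    assert (all : forall b : Scal ComplexK, sabs ComplexK b = 1 ->
              lipnorm X (IplusT X b T) <= Rmax (G 1 m1) (G (- (1)) m2)).
    { intros b Hb. destruct (unit_circle_cover b Hb) as [Hp [E|E]]; rewrite E.
      - eapply Rle_trans; [apply (Hm1 _ Hp)|apply Rmax_l].
      - eapply Rle_trans; [apply (Hm2 _ Hp)|apply Rmax_r]. }
    destruct (Rle_dec (G (- (1)) m2) (G 1 m1)).
    + exists (circle_point 1 m1). split; [apply circle_point_unit; auto|].
      intros b Hb. pose proof (all b Hb). rewrite Rmax_left in H by lra. exact H.
    + exists (circle_point (- (1)) m2). split; [apply circle_point_unit; auto|].
      intros b Hb. pose proof (all b Hb). rewrite Rmax_right in H by lra. exact H.
Qed.

Definition scT (a : Scal k) (T : X -> X) : X -> X := fun x => vscal a (T x).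

Lemma scT_Lip0 a T : Lip0 X T -> Lip0 X (scT a T).
Proof.
  intros [H0 [c Hc]]. split.
  - unfold scT. rewrite H0. apply vscal_z0.
  - exists (sabs k a * c). intros x y. unfold scT. rewrite <- scal_sub, vnormZ, Rmult_assoc.
    apply Rmult_le_compat_l; [apply sabs_ge0 | apply Hc].
Qed.

Lemma scT_lipnorm a T : sabs k a = 1 -> lipnorm X (scT a T) = lipnorm X T.
Proof.
  intro Ha. apply Rsup_equiv. intro r. unfold scT.
  split; intros [x [y [H E]]]; exists x, y; split; auto;
    rewrite E, <- ?scal_sub, ?vnormZ, ?Ha, ?Rmult_1_l; reflexivity.
Qed.

(** Re W(αT) = Re (α W(T)) <= ω(T) for |α| = 1. *)
Lemma supReW_scT_le a T : Lip0 X T -> sabs k a = 1 -> supReW X (scT a T) <= omega X T.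
Proof.
  intros HT Ha. apply (lub_least _ _ _ (supReW_lub X hX _ (scT_Lip0 a T HT))).
  intros r [l' [[x [y [f [Hxy [HD ->]]]]] ->]].
  destruct (Dset_props X _ f HD (sub_neq0 x y Hxy)) as [Hlin _].
  unfold scT. rewrite <- scal_sub, (lin_scal X f Hlin).
  set (l := smul k (f (vsub (T x) (T y))) (sofR k (/ vnorm (vsub x y) ^ 2))).
  apply Rle_trans with (sabs k l).
  - eapply Rle_trans; [apply sRe_le_abs|]. unfold l. rewrite !sabs_mul, Ha. lra.
  - apply (lub_le _ _ _ (omega_lub X hX T HT)). exists l. split; auto. exists x, y, f. auto.
Qed.

(** (b): apply (a) to αT for a maximizing α in one direction; in the other, combine the
    attained maximum with the key lower bound for rotations of almost extremal λ ∈ W(T). *)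
Lemma partB T : Lip0 X T ->
  (is_max (rot_norms X T) (1 + lipnorm X T) <-> omega X T = lipnorm X T).
Proof.
  intro HT. pose proof (omega_bounds X hX T HT) as Ho. split.
  - intros [[a [Ha E]] _].
    pose proof (proj1 (partA X hX (scT a T) (scT_Lip0 a T HT))) as PA.
    rewrite scT_lipnorm in PA by exact Ha.
    pose proof (supReW_scT_le a T HT Ha).
    pose proof (PA (eq_sym E)). lra.
  - intro HoL. destruct (rotation_max T HT) as [a [Ha Hmax]].
    assert (Hup : lipnorm X (IplusT X a T) <= 1 + lipnorm X T).
    { pose proof (lipnorm_IplusT_le X hX a T HT). rewrite Ha, Rmult_1_l in H. exact H. }
    assert (Hlow : 1 + lipnorm X T <= lipnorm X (IplusT X a T)).
    { apply le_epsilon. intros eps He.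
      destruct (lub_approx _ _ eps (omega_lub X hX T HT) He) as [r [[l [Hl ->]] Hr]].
      destruct (unit_rotation k l) as [b [Hb Eb]].
      pose proof (numrange_lower_bound X hX T HT b l Hl). pose proof (Hmax b Hb). lra. }
    split.
    + exists a. split; auto. lra.
    + intros r [b [Hb ->]]. pose proof (Hmax b Hb). lra.
Qed.

(** n_L(X) = 1 iff ω(T) = ‖T‖_L = 1 for all T with ‖T‖_L = 1 (recall ω(T) <= ‖T‖_L and
    ω(I) = 1), which is (b) with ‖T‖_L = 1. *)
Lemma numerical_index_one :
  nL X = 1 <-> forall T, Lip0 X T -> lipnorm X T = 1 -> is_max (rot_norms X T) 2.
Proof.
  set (E := fun r => exists T : X -> X, Lip0 X T /\ lipnorm X T = 1 /\ - r = omega X T).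
  assert (NL : nL X = - Rsup E) by reflexivity.
  destruct (identity_Lip0 X hX) as [Hid1 Hid2].
  assert (Eid : E (- omega X (fun x => x))).
  { exists (fun x => x). rewrite Ropp_involutive. auto. }
  assert (Eub : forall r, E r -> r <= 0).
  { intros r [T [HT [_ Hr]]]. pose proof (omega_bounds X hX T HT). lra. }
  assert (two : forall T, lipnorm X T = 1 -> 2 = 1 + lipnorm X T) by (intros T ->; ring).
  split.
  - intros H T HT HL. rewrite (two T HL). apply (partB T HT).
    assert (HS : is_lub E (Rsup E)) by (apply Rsup_spec; eauto).
    assert (ET : E (- omega X T)) by (exists T; rewrite Ropp_involutive; auto).
    pose proof (lub_le _ _ _ HS ET). pose proof (omega_bounds X hX T HT). lra.
  - intro H. rewrite NL.
    assert (all1 : forall r, E r -> r = - (1)).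
    { intros r [T [HT [HL Hr]]]. pose proof (H T HT HL) as HM. rewrite (two T HL) in HM.
      apply (partB T HT) in HM. lra. }
    rewrite (Rsup_lub E (- (1))); [ring|]. split.
    + intros r Hr. rewrite (all1 r Hr). lra.
    + intros b Hb. pose proof (Hb _ Eid). rewrite (all1 _ Eid) in H0. exact H0.
Qed.

End Rotations.

Theorem corollary2p4 (k : kind) (X : BanachSpace k)
  (hX : exists x : X, x <> vzero X) :
  (forall T : X -> X, Lip0 X T ->
     (lipnorm X (fun x => vadd x (T x)) = 1 + lipnorm X T
        <-> supReW X T = lipnorm X T) /\
     (is_max (rot_norms X T) (1 + lipnorm X T)
        <-> omega X T = lipnorm X T)) /\
  (nL X = 1 <->
     forall T : X -> X, Lip0 X T -> lipnorm X T = 1 -> is_max (rot_norms X T) 2).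
Proof.
  split.
  - intros T HT. split; [exact (partA X hX T HT) | exact (partB X hX T HT)].
  - exact (numerical_index_one X hX).
Qed.
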